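(* Let $n\geq1$, $\eta\in\Omega$, $l\in\{1,\ldots,n\}$ and $(r_1,\ldots,r_l)\in\mathbb N^l$. For $1\leq i\leq l$ let $T_{i,\eta}+r_i=\{v+(r_i,r_i):v\in T_{i,\eta}\}$. Then $$\mathrm{span}_{\mathbb C}\{\bar v: v\in T_{0,\eta}\cup\textstyle\bigcup_{i=1}^l(T_{i,\eta}+r_i)\}=\mathrm{span}_{\mathbb C}\{\bar v:v\in\bigcup_{i=0}^lT_{i,\eta}\}.$$ In particular, $\overline{v_{l,\eta}+(r,r)}\in\mathrm{span}_{\mathbb C}\{\bar v:v\in\bigcup_{i=0}^lT_{i,\eta}\}$ for all $r\in\mathbb N$.
   Context: $n\geq1$ is fixed. $\Lambda_{2,n}=\{\alpha\in\mathbb N^2:1\leq\alpha_1+\alpha_2\leq n\}$, $\lambda_{2,n}=|\Lambda_{2,n}|$; for $v\in\mathbb N^2$, $\bar v=\big(\binom{v_1}{\alpha_1}\binom{v_2}{\alpha_2}\big)_{\alpha\in\Lambda_{2,n}}\in\mathbb C^{\lambda_{2,n}}$. $\Omega$ is the set of sequences $\eta=(z,d_0,d_1,\ldots,d_r)$ with $z\in\{0,1\}$, $d_0=0$, $d_i\geq1$ for $1\leq i\leq r$, $\sum_{i=0}^rd_i=n$. For $j\in\{1,\ldots,n\}$ let $t\in\{1,\ldots,r\}$ be unique with $\sum_{i=0}^{t-1}d_i<j\leq\sum_{i=0}^td_i$, $c=j-\sum_{i=0}^{t-1}d_i$; $v_{j,\eta}=(\sum_{i\text{ odd},i<t}d_i+c,0)$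 if $z=1,t$ odd; $(0,\sum_{i\text{ even},i<t}d_i+c)$ if $z=1,t$ even; $(0,\sum_{i\text{ odd},i<t}d_i+c)$ if $z=0,t$ odd; $(\sum_{i\text{ even},i<t}d_i+c,0)$ if $z=0,t$ even. $T_{j,\eta}=\{v_{j,\eta}+p(1,1):0\leq p\leq n-j\}$ for $1\leq j\leq n$, and $T_{0,\eta}=\{(p,p):1\leq p\leq n\}$. *)

From HB Require Import structures.
From mathcomp Require Import all_boot all_order all_algebra algC.
Set Implicit Arguments. Unset Strict Implicit. Unset Printing Implicit Defensive.
Import Order.TTheory GRing.Theory Num.Theory.

(* Lambda_{2,n} = {alpha in N^2 : 1 <= alpha_1 + alpha_2 <= n}, as a finite type
   (both coordinates are automatically <= n). *)
Definition Lam (n : nat) := {a : 'I_n.+1 * 'I_n.+1 | (0 < a.1 + a.2 <= n)%N}.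

(* The complex vector space C^{lambda_{2,n}}, coordinates indexed by Lam n.
   Complex numbers are the algebraic complex numbers algC (all vectors involved
   have integer entries). *)
Definition CLam (n : nat) := {ffun Lam n -> algC^o}.

Definition vbar (n : nat) (v : nat * nat) : CLam n :=
  [ffun a : Lam n => (('C(v.1, (val a).1) * 'C(v.2, (val a).2))%N)%:R%R].

Local Open Scope ring_scope.
Definition spanC (n : nat) (S : seq (nat * nat)) : {vspace CLam n} :=
  <<[seq vbar n v | v <- S]>>%VS.
Local Close Scope ring_scope.

(* eta = (z, d_0, d_1, ..., d_r) is represented by z : bool (z = 1 iff true)
   and ds = [:: d_1; ...; d_r]; d_0 = 0 is implicit. *)
Definition in_Omega (n : nat) (z : bool) (ds : seq nat) : Prop :=
  all (fun d => 0 < d) ds /\ sumn ds = n.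

Definition dseq (ds : seq nat) : seq nat := 0 :: ds.

Definition psum (ds : seq nat) (t : nat) : nat := sumn (take t (dseq ds)).

Definition tidx (ds : seq nat) (j : nat) : nat :=
  find (fun t => j <= psum ds t.+1) (iota 0 (size ds).+1).

Definition odd_sum (ds : seq nat) (t : nat) : nat :=
  \sum_(i < t | odd i) nth 0 (dseq ds) i.
Definition even_sum (ds : seq nat) (t : nat) : nat :=
  \sum_(i < t | ~~ odd i) nth 0 (dseq ds) i.

Definition v_eta (z : bool) (ds : seq nat) (j : nat) : nat * nat :=
  let t := tidx ds j in
  let c := j - psum ds t in
  if z then
    (if odd t then (odd_sum ds t + c, 0) else (0, even_sum ds t + c))
  else
    (if odd t then (0, odd_sum ds t + c) else (even_sum ds t + c, 0)).

Definition T_eta (n : nat) (z : bool) (ds : seq nat) (j : nat) : seq (nat * nat) :=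
  if j == 0 then [seq (p, p) | p <- iota 1 n]
  else [seq ((v_eta z ds j).1 + p, (v_eta z ds j).2 + p) | p <- iota 0 (n - j).+1].

Definition shiftT (T : seq (nat * nat)) (r : nat) : seq (nat * nat) :=
  [seq (v.1 + r, v.2 + r) | v <- T].

From HB Require Import structures.
From mathcomp Require Import all_boot all_order all_algebra algC.
From mathcomp Require Import zify.

(* The map (x, y) |-> vbar (x, y) is polynomial of total degree at most n, in
   the sense of finite differences.  The points v_0 = (0, 0), v_1, ..., v_n form
   a walk along the two axes, each step going one unit further out on one axis;
   hence if v_i = (c, 0), the diagonals through (c, j), 1 <= j <= i, pass through
   earlier points v_i'.  Modulo a span that already contains those diagonals, the
   i-th y-difference of vbar agrees with vbar on the diagonal of v_i, and there
   it is a polynomial of degree at most n - i, so it is determined by the n - i + 1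
   consecutive values given by T_i (or by T_i + r_i).  By induction on i, the
   whole diagonal of every v_i, i <= l, lies in both spans, while both generating
   sets lie on these diagonals. *)

Set Implicit Arguments. Unset Strict Implicit. Unset Printing Implicit Defensive.
Import GRing.Theory.
Local Open Scope ring_scope.

Section FiniteDifferences.
Variable V : zmodType.
Implicit Types (F G : nat -> nat -> V) (h : nat -> V).

Definition diffx F x y := F x.+1 y - F x y.
Definition diffy F x y := F x y.+1 - F x y.

Fixpoint deg2_le d F : Prop :=
  match d with
  | 0 => forall x y, F x.+1 y = F x y /\ F x y.+1 = F x y
  | d'.+1 => deg2_le d' (diffx F) /\ deg2_le d' (diffy F)
  end.

Fixpoint deg1_le d h : Prop :=
  match d with
  | 0 => forall q, h q.+1 = h q
  | d'.+1 => deg1_le d' (fun q => h q.+1 - h q)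
  end.

Lemma eq_deg2_le d F G : F =2 G -> deg2_le d F -> deg2_le d G.
Proof.
elim: d F G => [|d IHd] F G eFG /=; first by move=> cF x y; rewrite -!eFG.
case=> dx dy; split; [apply: IHd dx | apply: IHd dy] => x y.
  by rewrite /diffx !eFG.
by rewrite /diffy !eFG.
Qed.

Lemma eq_deg1_le d h g : h =1 g -> deg1_le d h -> deg1_le d g.
Proof.
elim: d h g => [|d IHd] h g ehg /=; first by move=> ch q; rewrite -!ehg.
by apply: IHd => q; rewrite !ehg.
Qed.

Lemma deg2_le_const d (a : V) : deg2_le d (fun _ _ => a).
Proof.
elim: d a => [|d IHd] a /=; first by [].
by split; apply: eq_deg2_le (IHd 0) => x y; rewrite /diffx /diffy subrr.
Qed.

Lemma deg2_le_swap d F : deg2_le d F -> deg2_le d (fun x y => F y x).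
Proof.
elim: d F => [|d IHd] F /=; first by move=> cF x y; case: (cF y x).
by case=> dx dy; split; [apply: IHd dy | apply: IHd dx].
Qed.

Lemma deg2_le_shifty d F : deg2_le d F -> deg2_le d (fun x y => F x y.+1).
Proof.
elim: d F => [|d IHd] F /=; first by move=> cF x y; apply: cF.
by case=> dx dy; split; [apply: IHd dx | apply: IHd dy].
Qed.

Lemma deg2_leD d F G :
  deg2_le d F -> deg2_le d G -> deg2_le d (fun x y => F x y + G x y).
Proof.
elim: d F G => [|d IHd] F G /=.
  by move=> cF cG x y; case: (cF x y) => -> ->; case: (cG x y) => -> ->.
case=> dFx dFy [dGx dGy]; split.
  by apply: eq_deg2_le (IHd _ _ dFx dGx) => x y; rewrite /diffx opprD addrACA.
by apply: eq_deg2_le (IHd _ _ dFy dGy) => x y; rewrite /diffy opprD addrACA.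
Qed.

Lemma deg2_le_diffxy d F :
  deg2_le d.+1 F -> deg2_le d (fun x y => F x.+1 y.+1 - F x y).
Proof.
case=> dx dy; apply: eq_deg2_le (deg2_leD (deg2_le_shifty dx) dy) => x y.
by rewrite /diffx /diffy addrA subrK.
Qed.

Lemma deg2_le_iter_diffy k e F : deg2_le (k + e) F -> deg2_le e (iter k diffy F).
Proof. by elim: k F => [|k IHk] F //; rewrite addSn iterSr => -[_ /IHk]. Qed.

Lemma deg2_le_diag d c F : deg2_le d F -> deg1_le d (fun q => F (c + q)%N q).
Proof.
elim: d F => [|d IHd] F /=.
  by move=> cF q; rewrite addnS; case: (cF (c + q)%N q.+1) => -> _; case: (cF (c + q)%N q).
move=> dF; apply: eq_deg1_le (IHd _ (deg2_le_diffxy dF)) => q.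
by rewrite addnS.
Qed.

Variable S : zmodClosed V.

Lemma mem_of_step_invariant h s :
  (forall q, (h q.+1 \in S) = (h q \in S)) -> h s \in S -> forall q, h q \in S.
Proof.
move=> hS hs; suff memE q : (h q \in S) = (h 0%N \in S) by move=> q; rewrite memE -(memE s).
by elim: q => // q <-; apply: hS.
Qed.

Lemma deg1_le_mem d h s :
  deg1_le d h -> (forall p, (p <= d)%N -> h (s + p)%N \in S) -> forall q, h q \in S.
Proof.
elim: d h s => [|d IHd] h s dh hs; apply: (mem_of_step_invariant (s := s)).
- by move=> q; rewrite dh.
- by rewrite -[s]addn0 hs.
- have dS q : h q.+1 - h q \in S.
    apply: (IHd (fun q => h q.+1 - h q) s dh) => p lepd.
    by rewrite -addnS; apply: rpredB; apply: hs; lia.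
  by move=> q; rewrite -[h q.+1](subrK (h q)) rpredDl.
- by rewrite -[s]addn0 hs.
Qed.

Lemma mem_iter_diffy k F x y :
  (forall j, (0 < j <= k)%N -> F x (y + j)%N \in S) ->
  (iter k diffy F x y \in S) = (F x y \in S).
Proof.
elim: k F y => [|k IHk] F y // FS; rewrite iterSr IHk /diffy.
  by rewrite rpredBl // -addn1 FS.
by move=> j lejk; rewrite -addnS; apply: rpredB; apply: FS; lia.
Qed.

Lemma deg2_le_diag_mem n i c s F :
  (i <= n)%N -> deg2_le n F ->
  (forall j, (0 < j <= i)%N -> forall q, F (c + q)%N (q + j)%N \in S) ->
  (forall p, (p <= n - i)%N -> F (c + (s + p))%N (s + p)%N \in S) ->
  forall q, F (c + q)%N q \in S.
Proof.
move=> lein dF sideS windowS.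
have memE q : (iter i diffy F (c + q)%N q \in S) = (F (c + q)%N q \in S).
  by apply: mem_iter_diffy => j /sideS.
have dG : deg2_le (n - i) (iter i diffy F) by apply: deg2_le_iter_diffy; rewrite subnKC.
move=> q; rewrite -memE; apply: (deg1_le_mem (s := s) (deg2_le_diag c dG)) => p lep.
by rewrite memE windowS.
Qed.
End FiniteDifferences.

Lemma deg2_le_binom (R : pzRingType) d p q : (p + q <= d)%N ->
  deg2_le d (fun x y => ('C(x, p) * 'C(y, q))%:R : R).
Proof.
elim: d p q => [|d IHd] p q /=.
  by rewrite leqn0 addn_eq0 => /andP[/eqP-> /eqP->] x y; rewrite !bin0.
move=> lepq; split.
  case: p lepq => [|p] lepq.
    by apply: eq_deg2_le (deg2_le_const d 0) => x y; rewrite /diffx !bin0 subrr.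
  apply: eq_deg2_le (IHd p q _) => [x y|]; last by lia.
  by rewrite /diffx binS mulnDl natrD addrAC subrr add0r.
case: q lepq => [|q] lepq.
  by apply: eq_deg2_le (deg2_le_const d 0) => x y; rewrite /diffy !bin0 subrr.
apply: eq_deg2_le (IHd p q _) => [x y|]; last by lia.
by rewrite /diffy binS mulnDr natrD addrAC subrr add0r.
Qed.

Lemma deg2_le_ffun (I : finType) (V : zmodType) d (F : I -> nat -> nat -> V) :
  (forall a, deg2_le d (F a)) -> deg2_le d (fun x y => [ffun a => F a x y]).
Proof.
elim: d F => [|d IHd] F /= dF.
  by move=> x y; split; apply/ffunP => a; rewrite !ffunE; case: (dF a x y).
split.
  apply: eq_deg2_le (IHd (fun a => diffx (F a)) (fun a => (dF a).1)) => x y.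
  by apply/ffunP => a; rewrite !ffunE.
apply: eq_deg2_le (IHd (fun a => diffy (F a)) (fun a => (dF a).2)) => x y.
by apply/ffunP => a; rewrite !ffunE.
Qed.

Lemma deg2_le_vbar n : deg2_le n (fun x y => vbar n (x, y)).
Proof.
pose B (a : Lam n) x y : algC^o := ('C(x, (val a).1) * 'C(y, (val a).2))%:R.
apply: (@deg2_le_ffun _ _ n B) => a.
by apply: deg2_le_binom; case/andP: (valP a).
Qed.

Lemma vbar0 n : vbar n (0, 0)%N = 0.
Proof. by apply/ffunP => -[[[[|i] ?] [[|j] ?]] ?]; rewrite !ffunE. Qed.

Local Close Scope ring_scope.

(* Step j + 1 goes one unit further out on the x-axis if [b j], on the y-axis
   otherwise. *)
Definition walk (b : nat -> bool) (j : nat) : nat * nat :=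
  if j is j'.+1 then
    if b j' then (count b (iota 0 j), 0) else (0, count (predC b) (iota 0 j))
  else (0, 0).

Lemma count_iotaS (a : pred nat) j : count a (iota 0 j.+1) = count a (iota 0 j) + a j.
Proof. by rewrite -addn1 iotaD count_cat /= addn0. Qed.

Lemma count_iota_predC (a : pred nat) j : count a (iota 0 j) + count (predC a) (iota 0 j) = j.
Proof. by rewrite count_predC size_iota. Qed.

Lemma walk_predC b j : walk (predC b) j = ((walk b j).2, (walk b j).1).
Proof.
have eCC s : count (predC (predC b)) s = count b s.
  by apply: eq_count => i /=; rewrite negbK.
by case: j => [|j] //; rewrite /walk eCC /=; case: (b j).
Qed.

Lemma walk_axis_x b j k :
  k <= count b (iota 0 j) -> exists2 i, i <= j & walk b i = (k, 0).
Proof.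
elim: j => [|j IHj]; first by rewrite leqn0 => /eqP->; exists 0.
rewrite count_iotaS; case: (leqP k (count b (iota 0 j))) => [/IHj[i lei wi] _|ltk lek].
  by exists i => //; rewrite leqW.
exists j.+1 => //; rewrite /walk count_iotaS.
by case: (b j) ltk lek => /= ltk lek; [congr pair; lia | lia].
Qed.

Lemma walk_axis_y b j k :
  k <= count (predC b) (iota 0 j) -> exists2 i, i <= j & walk b i = (0, k).
Proof.
move=> /(walk_axis_x (b := predC b))[i lei wi]; exists i => //.
by move: wi; rewrite walk_predC; case: (walk b i) => x y [-> ->].
Qed.

(* With truncated subtraction, [(c - j, j - c)] is the axis point on the
   diagonal through [(c, j)]. *)
Lemma walk_prev_diag b i c j :
  walk b i = (c, 0) -> 0 < j <= i -> exists2 i', i' < i & walk b i' = (c - j, j - c).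
Proof.
case: i => [|i]; first by move=> _; lia.
have cS := count_iotaS b i; have cpS := count_iotaS (predC b) i.
have csum := count_iota_predC b i.
rewrite [walk b i.+1]/walk cS cpS; case bi: (b i) => /=; last by rewrite bi => -[_ cy0]; lia.
move=> [ec] lej.
case: (leqP j c) => lejc.
  have [|i' lei' wi'] := @walk_axis_x b i (c - j); first lia.
  by exists i'; [lia | rewrite wi'; congr pair; lia].
have [|i' lei' wi'] := @walk_axis_y b i (j - c); first lia.
by exists i'; [lia | rewrite wi'; congr pair; lia].
Qed.


Section WalkDiagonals.
Variables (V : zmodType) (S : zmodClosed V) (n : nat).

Local Notation on_diag F b i q := (F ((walk b i).1 + q) ((walk b i).2 + q)).

Lemma walk_diag_mem_step F b i c s :
  deg2_le n F -> i <= n -> walk b i = (c, 0) ->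
  (forall i', i' < i -> forall q, on_diag F b i' q \in S) ->
  (forall p, p <= n - i -> F (c + (s + p)) (s + p) \in S) ->
  forall q, F (c + q) q \in S.
Proof.
move=> dF lein wi prevS windowS; apply: deg2_le_diag_mem lein dF _ windowS.
move=> j lej q; have [i' lti' wi'] := walk_prev_diag wi lej.
have := prevS i' lti' (q + minn c j); rewrite wi' /=.
have -> : c - j + (q + minn c j) = c + q by lia.
by have -> : j - c + (q + minn c j) = q + j by lia.
Qed.

Lemma walk_diag_mem F b l :
  deg2_le n F -> l <= n ->
  (forall i, i <= l -> exists s, forall p, p <= n - i -> on_diag F b i (s + p) \in S) ->
  forall i, i <= l -> forall q, on_diag F b i q \in S.
Proof.
move=> dF leln windowS; elim/ltn_ind => i IHi leil.
have prevS i' : i' < i -> forall q, on_diag F b i' q \in S.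
  by move=> lti'; apply: IHi lti' (leq_trans (ltnW lti') leil).
have [s ws] := windowS i leil; have lein := leq_trans leil leln.
have [wi|wi]: (walk b i).2 = 0 \/ (walk b i).1 = 0.
  by case: i {IHi prevS ws leil lein} => [|i] /=; [left | case: (b i); [left | right]].
- move=> q; rewrite wi add0n; apply: (walk_diag_mem_step (s := s) dF lein _ prevS _ q).
    by rewrite [walk b i]surjective_pairing wi.
  by move=> p /ws; rewrite wi.
- have dF' := deg2_le_swap dF.
  have swapE i' q : on_diag (fun x y => F y x) (predC b) i' q = on_diag F b i' q.
    by rewrite walk_predC.
  move=> q; rewrite wi add0n.
  apply: (walk_diag_mem_step (F := fun x y => F y x) (b := predC b) (s := s) dF' lein _ _ _ q).
  + by rewrite walk_predC [walk b i]surjective_pairing wi.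
  + by move=> i' lti' q'; rewrite swapE prevS.
  + by move=> p /ws; rewrite wi.
Qed.

End WalkDiagonals.


Lemma psumS ds t : psum ds t.+1 = psum ds t + nth 0 (dseq ds) t.
Proof.
rewrite /psum; elim: (dseq ds) t => [|d s IHs] [|t] /=; rewrite ?take0 ?addn0 //.
by rewrite IHs addnA.
Qed.

Lemma psum_size ds : psum ds (size ds).+1 = sumn ds.
Proof. by rewrite /psum /dseq take_oversize. Qed.

Lemma psum_mono ds : {homo psum ds : t t' / t <= t'}.
Proof.
move=> t t' /subnKC <-; elim: (t' - t) => [|k IHk]; first by rewrite addn0.
by rewrite addnS psumS (leq_trans IHk) ?leq_addr.
Qed.

Lemma tidx_spec ds j : 0 < j <= sumn ds ->
  tidx ds j <= size ds /\ psum ds (tidx ds j) < j <= psum ds (tidx ds j).+1.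
Proof.
move=> /andP[j0 jn]; rewrite /tidx; set P := fun t => j <= psum ds t.+1.
have hasP : has P (iota 0 (size ds).+1).
  by apply/hasP; exists (size ds); rewrite ?mem_iota ?ltnSn // /P psum_size.
have := has_find P (iota 0 (size ds).+1); rewrite hasP size_iota => /esym ltt.
split; first by rewrite -ltnS.
have := nth_find 0 hasP; rewrite nth_iota // add0n /P => ->; rewrite andbT.
case Et: (find P _) ltt => [|t] ltt //.
have := @before_find _ 0 P (iota 0 (size ds).+1) t.
rewrite Et nth_iota ?add0n; last by rewrite ltnW.
by rewrite /P => /(_ (ltnSn t)) /negbT; rewrite -ltnNge.
Qed.

Lemma tidx_char ds j t :
  t <= size ds -> psum ds t < j <= psum ds t.+1 -> tidx ds j = t.
Proof.
move=> lets /andP[ltj lej].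
have jn : 0 < j <= sumn ds.
  by rewrite (leq_trans _ ltj) //= (leq_trans lej) // -psum_size psum_mono.
have [_ /andP[ltj' lej']] := tidx_spec jn.
case: (ltngtP (tidx ds j) t) => // [lt|gt].
  by have := psum_mono ds lt; lia.
by have := psum_mono ds gt; lia.
Qed.

Definition parity_sum (z : bool) ds t := \sum_(i < t | odd i == z) nth 0 (dseq ds) i.

Lemma parity_sumS z ds t :
  parity_sum z ds t.+1 = parity_sum z ds t + (odd t == z) * nth 0 (dseq ds) t.
Proof.
rewrite /parity_sum big_mkcond big_ord_recr /= -big_mkcond.
by case: (_ == z); rewrite ?mul1n ?mul0n ?addn0.
Qed.

Lemma odd_sumE ds t : odd_sum ds t = parity_sum true ds t.
Proof. by apply: eq_bigl => i; rewrite eqb_id. Qed.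

Lemma even_sumE ds t : even_sum ds t = parity_sum false ds t.
Proof. by apply: eq_bigl => i; rewrite eqbF_neg. Qed.

(* [block_parity z ds i] says that v_(i+1) lies on the x-axis. *)
Definition block_parity z ds i := odd (tidx ds i.+1) == z.

Lemma count_block z ds t k : t <= size ds -> k <= nth 0 (dseq ds) t ->
  count (block_parity z ds) (iota (psum ds t) k) = (odd t == z) * k.
Proof.
move=> lets lek; rewrite (@eq_in_count _ _ (fun _ => odd t == z)).
  by case: (odd t == z); rewrite ?count_predT ?count_pred0 ?size_iota ?mul1n.
move=> i; rewrite mem_iota => /andP[lei ltik].
rewrite /block_parity (@tidx_char _ _ t) // psumS; lia.
Qed.

Lemma count_psum z ds t : t <= size ds ->
  count (block_parity z ds) (iota 0 (psum ds t)) = parity_sum z ds t.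
Proof.
elim: t => [|t IHt] lets; first by rewrite /parity_sum big_ord0.
by rewrite psumS iotaD count_cat IHt ?count_block ?parity_sumS // ltnW.
Qed.

Lemma count_block_parity z ds j : 0 < j <= sumn ds ->
  count (block_parity z ds) (iota 0 j) =
  parity_sum z ds (tidx ds j) + (odd (tidx ds j) == z) * (j - psum ds (tidx ds j)).
Proof.
move=> /tidx_spec[lets /andP[ltj lej]].
rewrite -{1}(subnKC (ltnW ltj)) iotaD count_cat count_psum ?count_block //.
by move: lej; rewrite psumS; lia.
Qed.

Lemma v_eta_walk z ds j : j <= sumn ds -> v_eta z ds j = walk (block_parity z ds) j.
Proof.
case: j => [|j] lejn; first by rewrite /v_eta /even_sum big_ord0; case: z.
have j0n : 0 < j.+1 <= sumn ds by [].
have countC : count (predC (block_parity z ds)) (iota 0 j.+1)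
            = count (block_parity (~~ z) ds) (iota 0 j.+1).
  by apply: eq_count => i /=; rewrite /block_parity; case: z; case: (odd _).
rewrite /walk {}countC !count_block_parity // /v_eta /block_parity odd_sumE even_sumE.
by case: z; case: (odd _); rewrite /= ?mul1n ?mul0n ?addn0.
Qed.

Definition diag_pt (v : nat * nat) (q : nat) : nat * nat := (v.1 + q, v.2 + q).

Lemma diag_ptD v p q : diag_pt (diag_pt v p) q = diag_pt v (p + q).
Proof. by rewrite /diag_pt /= !addnA. Qed.

Lemma diag_pt_mem_shiftT T v r : v \in T -> diag_pt v r \in shiftT T r.
Proof. exact: (map_f (diag_pt^~ r)). Qed.

Lemma v_eta0 z ds : v_eta z ds 0 = (0, 0).
Proof. exact: v_eta_walk. Qed.

Lemma T_eta_on_diag n z ds i w :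
  w \in T_eta n z ds i -> exists q, w = diag_pt (v_eta z ds i) q.
Proof.
rewrite /T_eta; case: eqP => [->|_] /mapP[p _ ->]; last by exists p.
by exists p; rewrite v_eta0.
Qed.

Lemma diag_pt_mem_T_eta n z ds i p :
  0 < i -> p <= n - i -> diag_pt (v_eta z ds i) p \in T_eta n z ds i.
Proof.
by rewrite /T_eta => /lt0n_neq0/negbTE-> lep; apply: map_f; rewrite mem_iota.
Qed.

Lemma diag_mem_T_eta0 n z ds p : 0 < p <= n -> diag_pt (v_eta z ds 0) p \in T_eta n z ds 0.
Proof. by rewrite v_eta0 => lep; apply: map_f; rewrite mem_iota; lia. Qed.

Lemma vbar_mem_spanC n L w : w \in L -> vbar n w \in spanC n L.
Proof. by move=> Lw; apply/memv_span/map_f. Qed.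

Lemma v_eta_diag_mem n z ds l (U : {vspace CLam n}) :
  sumn ds = n -> l <= n ->
  (forall p, 0 < p <= n -> vbar n (diag_pt (v_eta z ds 0) p) \in U) ->
  (forall i, 0 < i <= l -> exists s, forall p, p <= n - i ->
     vbar n (diag_pt (v_eta z ds i) (s + p)) \in U) ->
  forall i q, i <= l -> vbar n (diag_pt (v_eta z ds i) q) \in U.
Proof.
move=> sum_ds leln diag0 windowS i q leil.
have vwalk j : j <= l -> v_eta z ds j = walk (block_parity z ds) j.
  by move=> lejl; rewrite v_eta_walk // sum_ds (leq_trans lejl).
rewrite vwalk //; move: i leil q.
apply: (walk_diag_mem (F := fun x y => vbar n (x, y))) (deg2_le_vbar n) leln _.
case=> [|i] leil.
  exists 0 => -[|p] lep; rewrite /= !add0n; first by rewrite vbar0 rpred0.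
  by move: (diag0 p.+1); rewrite vwalk //; apply; rewrite subn0 in lep.
have [|s ws] := windowS i.+1; first by rewrite leil.
by exists s => p /ws; rewrite vwalk.
Qed.

Lemma spanC_eq_of_diags n (L L' : seq (nat * nat)) (D : nat -> nat -> nat * nat) l :
  (forall w, w \in L ++ L' -> exists2 i, i <= l & exists q, w = D i q) ->
  (forall i q, i <= l -> vbar n (D i q) \in spanC n L) ->
  (forall i q, i <= l -> vbar n (D i q) \in spanC n L') ->
  spanC n L = spanC n L'.
Proof.
move=> onD DL DL'; apply/eqP; rewrite eqEsubv.
apply/andP; split; apply/span_subvP => _ /mapP[w Lw ->].
  by have [|i lei [q ->]] := onD w; rewrite ?mem_cat ?Lw ?DL'.
by have [|i lei [q ->]] := onD w; rewrite ?mem_cat ?Lw ?orbT ?DL.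
Qed.

Lemma on_diag_T_etas n z ds l w :
  w \in flatten [seq T_eta n z ds i | i <- iota 0 l.+1] ->
  exists2 i, i <= l & exists q, w = diag_pt (v_eta z ds i) q.
Proof.
move=> /flatten_mapP[i]; rewrite mem_iota => /andP[_ ltil] /T_eta_on_diag[q ->].
by exists i => //; exists q.
Qed.

Lemma on_diag_shifted_T_etas n z ds l (r : 'I_l -> nat) w :
  w \in T_eta n z ds 0 ++
        flatten [seq shiftT (T_eta n z ds i.+1) (r i) | i : 'I_l <- enum 'I_l] ->
  exists2 i, i <= l & exists q, w = diag_pt (v_eta z ds i) q.
Proof.
rewrite mem_cat => /orP[/T_eta_on_diag[q ->]|]; first by exists 0 => //; exists q.
move=> /flatten_mapP[i _ /mapP[w' /T_eta_on_diag[p ->] ->]].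
by exists i.+1 => //; exists (p + r i); rewrite -diag_ptD.
Qed.

Lemma diag_mem_span_T_etas n z ds l : sumn ds = n -> l <= n ->
  forall i q, i <= l -> vbar n (diag_pt (v_eta z ds i) q)
    \in spanC n (flatten [seq T_eta n z ds i | i <- iota 0 l.+1]).
Proof.
move=> sum_ds leln; apply: v_eta_diag_mem sum_ds leln _ _ => [p lep|i /andP[i0 leil]].
  by apply/vbar_mem_spanC/flatten_mapP; exists 0; rewrite ?diag_mem_T_eta0.
exists 0 => p lep; apply/vbar_mem_spanC/flatten_mapP.
by exists i; rewrite ?mem_iota ?diag_pt_mem_T_eta.
Qed.

Lemma diag_mem_span_shifted_T_etas n z ds l (r : 'I_l -> nat) :
  sumn ds = n -> l <= n ->
  forall i q, i <= l -> vbar n (diag_pt (v_eta z ds i) q) \in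
    spanC n (T_eta n z ds 0 ++
             flatten [seq shiftT (T_eta n z ds i.+1) (r i) | i : 'I_l <- enum 'I_l]).
Proof.
move=> sum_ds leln; apply: v_eta_diag_mem sum_ds leln _ _ => [p lep|[//|i] /andP[_ ltil]].
  by apply/vbar_mem_spanC; rewrite mem_cat diag_mem_T_eta0.
exists (r (Ordinal ltil)) => p lep.
apply/vbar_mem_spanC; rewrite mem_cat; apply/orP; right.
apply/flatten_mapP; exists (Ordinal ltil); rewrite ?mem_enum //.
by rewrite addnC -diag_ptD; apply/diag_pt_mem_shiftT/diag_pt_mem_T_eta.
Qed.

Theorem proposition2p14 (n : nat) (z : bool) (ds : seq nat) (l : nat)
    (r : 'I_l -> nat) :
  (1 <= n)%N -> in_Omega n z ds -> (1 <= l <= n)%N ->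
  spanC n (T_eta n z ds 0 ++
           flatten [seq shiftT (T_eta n z ds i.+1) (r i) | i : 'I_l <- enum 'I_l])
  = spanC n (flatten [seq T_eta n z ds i | i <- iota 0 l.+1])
  /\ (forall rr : nat,
        vbar n ((v_eta z ds l).1 + rr, (v_eta z ds l).2 + rr)
          \in spanC n (flatten [seq T_eta n z ds i | i <- iota 0 l.+1])).
Proof.
move=> _ [_ sum_ds] /andP[_ leln].
split; last by move=> rr; apply: diag_mem_span_T_etas.
apply: (spanC_eq_of_diags (D := fun i => diag_pt (v_eta z ds i)) (l := l)).
- by move=> w; rewrite mem_cat => /orP[/on_diag_shifted_T_etas|/on_diag_T_etas].
- exact: diag_mem_span_shifted_T_etas.
- exact: diag_mem_span_T_etas.
Qed.
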